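(* Let $E$ be a finite-dimensional complex Hilbert space, $e\in E$ a unit vector, $\tau\in(0,1)$, and $T_0\in B(E)_+$. Define $$T_{n+1}:=T_n^{1/2}\bigl(I_E-\tau|e\rangle\langle e|\bigr)T_n^{1/2}\qquad(n\ge0),$$ and let $T_\infty:=\lim_n T_n$ (norm limit, which exists since $(T_n)$ is decreasing in the operator order). Let $Q:=I_E-|e\rangle\langle e|$ be the orthogonal projection onto $e^\perp$. With respect to $E=\mathbb{C}e\oplus e^\perp$ write $$T_n=\begin{pmatrix}a_n & b_n^*\\ b_n & B_n\end{pmatrix},$$ where $a_n:=\langle e,T_ne\rangle\ge0$, $b_n:=QT_ne\in e^\perp$, $B_n:=QT_nQ\in B(e^\perp)_+$, and set $y_n:=QT_n^{1/2}e\in e^\perp$. Then: (1) $a_{n+1}=(1-\tau)a_n+\tau\|y_n\|^2$ for every $n\ge0$. (2) $\tau\sum_{n=0}^\infty\|y_n\|^2=\mathrm{tr}(B_0-B_\infty)<\infty$, where $B_\infty:=QT_\infty Q$; in particular $y_n\to0$. (3) $a_n\to0$. (4) $b_n\to0$. Consequently, with respect to $E=\mathbb{C}e\oplus e^\perp$, $$T_\infty=\begin{pmatrix}0&0\\0&B_\infty\end{pmatrix},$$ equivalently $T_\infty e=0$ and $\mathrm{ran}(T_\infty)\subseteq e^\perp$.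
   Context: For vectors $x,y$, $|x\rangle\langle y|$ denotes the operator $z\mapsto\langle y,z\rangle x$. $B(E)_+$ denotes the positive operators on $E$; $T^{1/2}$ is the positive square root. *)

From HB Require Import structures.
From mathcomp Require Import all_boot all_order all_algebra.
From mathcomp Require Import complex.
From mathcomp Require Import all_classical all_reals all_analysis.

Set Implicit Arguments.
Unset Strict Implicit.
Unset Printing Implicit Defensive.

Import Order.TTheory GRing.Theory Num.Theory.
Import numFieldNormedType.Exports numFieldTopology.Exports.
Local Open Scope ring_scope.
Local Open Scope complex_scope.

(* E = C^(n.+1), vectors are column vectors 'cV_(n.+1), operators are
   matrices 'M_(n.+1) acting by left multiplication, inner product
   <x,y> = (x^* y) (antilinear in the first argument). *)

Definition adjmx (R : rcfType) m p (A : 'M[R[i]]_(m, p)) : 'M[R[i]]_(p, m) :=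
  (map_mx Num.conj A)^T.

Definition cdot (R : rcfType) m (x y : 'cV[R[i]]_m) : R[i] :=
  (adjmx x *m y) 0 0.

Definition normsq (R : rcfType) m (x : 'cV[R[i]]_m) : R :=
  \sum_(k < m) (complex.Re (x k 0) ^+ 2 + complex.Im (x k 0) ^+ 2).

Definition psdmx (R : rcfType) m (A : 'M[R[i]]_m) : Prop :=
  adjmx A = A /\ forall x : 'cV[R[i]]_m, 0 <= cdot x (A *m x).

Definition ketbra (R : rcfType) m (x y : 'cV[R[i]]_m) : 'M[R[i]]_m :=
  x *m adjmx y.

(* positive square root of a positive operator, via the spectral theorem:
   A = U^-1 diag(d) U with U unitary, and A^{1/2} = U^-1 diag(sqrt d) U *)
Definition sqrtmx (R : rcfType) m (A : 'M[R[i]]_m) : 'M[R[i]]_m :=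
  invmx (spectralmx A) *m diag_mx (map_mx sqrtC (spectral_diag A))
    *m spectralmx A.

Fixpoint Tseq (R : rcfType) m (T0 : 'M[R[i]]_m) (e : 'cV[R[i]]_m) (tau : R)
    (k : nat) : 'M[R[i]]_m :=
  match k with
  | 0 => T0
  | k'.+1 => let S := sqrtmx (Tseq T0 e tau k') in
             S *m (1%:M - tau%:C *: ketbra e e) *m S
  end.

HB.instance Definition _ (R : rcfType) :=
  PseudoPointedMetric.copy R[i] (R[i] : numClosedFieldType)^o.

(* Writing S = T_k^{1/2}, the recursion is the rank-one update
   T_{k+1} = T_k - tau |S e><S e|, so the T_k are positive and decreasing, and
   by polarization they converge.  Since <e, T_k e> = |S e|^2
   = |<e, S e>|^2 + |y_k|^2, the update lowers a_k by tau (a_k - |y_k|^2), which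
   is (1); compressed by Q it reads Q T_{k+1} Q = Q T_k Q - tau |y_k><y_k|,
   whose traces telescope to (2).  Summing (1) bounds tau (a_0 + ... + a_N) by
   a_0 + tau sum |y_k|^2, so a_k -> 0.  Hence <e, T_inf e> = 0, and positivity
   of T_inf forces T_inf e = 0, which gives (4). *)

From HB Require Import structures.
From mathcomp Require Import all_boot all_order all_algebra.
From mathcomp Require Import complex.
From mathcomp Require Import all_classical all_reals all_analysis.
From mathcomp Require Import ring lra.
Import Order.TTheory GRing.Theory Num.Theory.
Import numFieldNormedType.Exports numFieldTopology.Exports.
Local Open Scope ring_scope.
Local Open Scope complex_scope.
Local Open Scope classical_set_scope.
Set Implicit Arguments.
Unset Strict Implicit.

Section Adjoint.
Variable R : rcfType.
Local Notation C := R[i].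
Local Notation cj := (@Num.conj C).

Lemma conjC_real (r : R) : cj r%:C = r%:C.
Proof. exact: conjc_real. Qed.

Lemma realCD (a b : R) : (a + b)%:C = a%:C + b%:C.
Proof. exact: rmorphD. Qed.

Lemma realCM (a b : R) : (a * b)%:C = a%:C * b%:C.
Proof. exact: rmorphM. Qed.

Lemma geC0_real (z : C) : 0 <= z -> z = (complex.Re z)%:C /\ 0 <= complex.Re z.
Proof. by case: z => a b; rewrite lecE /= => /andP[/eqP-> a_ge0]. Qed.

Lemma gtC0_real (z : C) : 0 < z -> z = (complex.Re z)%:C /\ 0 < complex.Re z.
Proof. by case: z => a b; rewrite ltcE /= => /andP[/eqP-> a_gt0]. Qed.

Lemma adjmxE m p (A : 'M[C]_(m, p)) i j : adjmx A i j = cj (A j i).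
Proof. by rewrite !mxE. Qed.

Lemma adjmxK m p (A : 'M[C]_(m, p)) : adjmx (adjmx A) = A.
Proof. by apply/matrixP => i j; rewrite !adjmxE conjCK. Qed.

Lemma adjmxM m p q (A : 'M[C]_(m, p)) (B : 'M[C]_(p, q)) :
  adjmx (A *m B) = adjmx B *m adjmx A.
Proof.
apply/matrixP => i j; rewrite !adjmxE !mxE rmorph_sum; apply: eq_bigr => k _.
by rewrite rmorphM !adjmxE mulrC.
Qed.

Lemma adjmxD m p (A B : 'M[C]_(m, p)) : adjmx (A + B) = adjmx A + adjmx B.
Proof. by apply/matrixP => i j; rewrite !mxE rmorphD. Qed.

Lemma adjmxB m p (A B : 'M[C]_(m, p)) : adjmx (A - B) = adjmx A - adjmx B.
Proof. by apply/matrixP => i j; rewrite !mxE rmorphB. Qed.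

Lemma adjmxZ m p (c : C) (A : 'M[C]_(m, p)) : adjmx (c *: A) = cj c *: adjmx A.
Proof. by apply/matrixP => i j; rewrite !mxE rmorphM. Qed.

Lemma adjmx0 m p : adjmx (0 : 'M[C]_(m, p)) = 0.
Proof. by apply/matrixP => i j; rewrite !mxE rmorph0. Qed.

Lemma adjmx1 m : adjmx (1%:M : 'M[C]_m) = 1%:M.
Proof. by apply/matrixP => i j; rewrite !mxE eq_sym rmorph_nat. Qed.

Lemma adjmx_delta m p (i : 'I_m) (j : 'I_p) :
  adjmx (delta_mx i j : 'M[C]_(m, p)) = delta_mx j i.
Proof. by apply/matrixP => a b; rewrite !mxE rmorph_nat andbC. Qed.

Lemma adj_ketbra m (x y : 'cV[C]_m) : adjmx (ketbra x y) = ketbra y x.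
Proof. by rewrite adjmxM adjmxK. Qed.

Lemma adjmx_tstar m p (A : 'M[C]_(m, p)) : (A ^t*)%sesqui = adjmx A.
Proof. by apply/matrixP => i j; rewrite !mxE. Qed.

Lemma adjmx_unitary m (U : 'M[C]_m) : U \is unitarymx -> invmx U = adjmx U.
Proof. by move=> uU; rewrite invmx_unitary // adjmx_tstar. Qed.

Lemma cdotC m (x y : 'cV[C]_m) : cdot y x = cj (cdot x y).
Proof. by rewrite /cdot -adjmxE adjmxM adjmxK. Qed.

Lemma cdotDl m (x y z : 'cV[C]_m) : cdot (x + y) z = cdot x z + cdot y z.
Proof. by rewrite /cdot adjmxD mulmxDl mxE. Qed.

Lemma cdotDr m (x y z : 'cV[C]_m) : cdot x (y + z) = cdot x y + cdot x z.
Proof. by rewrite /cdot mulmxDr mxE. Qed.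

Lemma cdotBr m (x y z : 'cV[C]_m) : cdot x (y - z) = cdot x y - cdot x z.
Proof. by rewrite /cdot mulmxBr !mxE. Qed.

Lemma cdotZl m (x y : 'cV[C]_m) c : cdot (c *: x) y = cj c * cdot x y.
Proof. by rewrite /cdot adjmxZ -scalemxAl mxE. Qed.

Lemma cdotZr m (x y : 'cV[C]_m) c : cdot x (c *: y) = c * cdot x y.
Proof. by rewrite /cdot -scalemxAr mxE. Qed.

Lemma cdot_adjmx m p (A : 'M[C]_(m, p)) x y :
  cdot x (A *m y) = cdot (adjmx A *m x) y.
Proof. by rewrite /cdot adjmxM adjmxK mulmxA. Qed.

Lemma cdot_ketbra m (x y z v : 'cV[C]_m) :
  cdot x (ketbra y z *m v) = cdot x y * cdot z v.
Proof.
by rewrite /cdot /ketbra !mulmxA -(mulmxA (adjmx x *m y)) [LHS]mxE big_ord1.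
Qed.

Lemma cdot_mulC_ge0 m (x y : 'cV[C]_m) : 0 <= cdot x y * cdot y x.
Proof. by rewrite cdotC -normCKC exprn_ge0. Qed.

Lemma mxtrace_ketbra m (x y : 'cV[C]_m) : \tr (ketbra x y) = cdot y x.
Proof. by rewrite mxtrace_mulC trace_mx11. Qed.

Lemma mx_entry_cdot m (A : 'M[C]_m) i j :
  A i j = cdot (delta_mx i 0) (A *m delta_mx j 0).
Proof. by rewrite /cdot adjmx_delta -colE -rowE !mxE. Qed.

Lemma cdot_normsq m (x : 'cV[C]_m) : cdot x x = (normsq x)%:C.
Proof.
rewrite /cdot mxE /normsq rmorph_sum; apply: eq_bigr => k _.
by rewrite adjmxE -normCKC -add_Re2_Im2.
Qed.

Lemma normsq_ge0 m (x : 'cV[C]_m) : 0 <= normsq x.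
Proof. by apply: sumr_ge0 => k _; rewrite addr_ge0 // sqr_ge0. Qed.

Lemma normsq_ge_entry m (x : 'cV[C]_m) i : `|x i 0| ^+ 2 <= (normsq x)%:C.
Proof.
rewrite -add_Re2_Im2 lecR /normsq (bigD1 i) //= lerDl.
by apply: sumr_ge0 => k _; rewrite addr_ge0 // sqr_ge0.
Qed.

Lemma normsq_eq0 m (x : 'cV[C]_m) : normsq x = 0 -> x = 0.
Proof.
move=> x0; apply/matrixP => i j; rewrite (ord1 j) mxE.
have := normsq_ge_entry x i; rewrite x0 => xi_le0.
have : `|x i 0| ^+ 2 == 0 by rewrite eq_le xi_le0 exprn_ge0.
by rewrite expf_eq0 /= normr_eq0 => /eqP.
Qed.

Lemma cdot_expand m (A : 'M[C]_m) x y c :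
  cdot (x + c *: y) (A *m (x + c *: y)) = cdot x (A *m x) + c * cdot x (A *m y)
    + cj c * cdot y (A *m x) + cj c * c * cdot y (A *m y).
Proof. by rewrite mulmxDr -scalemxAr !cdotDl !cdotDr !cdotZl !cdotZr; ring. Qed.

Lemma cdot_polarization m (A : 'M[C]_m) x y :
  cdot x (A *m y) = (4 * 'i%R)^-1 *
    ('i%R * (cdot (x + y) (A *m (x + y)) - cdot (x - y) (A *m (x - y)))
     + (cdot (x + 'i%R *: y) (A *m (x + 'i%R *: y))
        - cdot (x - 'i%R *: y) (A *m (x - 'i%R *: y)))).
Proof.
have i_neq0 : 'i%R != 0 :> C by rewrite -normr_eq0 normCi oner_neq0.
have cjNi : cj (- 'i%R) = 'i%R by rewrite rmorphN /= conjCi opprK.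
have := cdot_expand A x y 1; have := cdot_expand A x y (-1).
have := cdot_expand A x y 'i%R; have := cdot_expand A x y (- 'i%R).
rewrite scale1r scaleN1r scaleNr rmorph1 rmorphN1 cjNi conjCi => -> -> -> ->.
apply: (mulfI (_ : 4 * 'i%R != 0)); first by rewrite mulf_neq0 ?pnatr_eq0.
by rewrite mulrA mulfV ?mul1r ?mulf_neq0 ?pnatr_eq0 //; ring.
Qed.

Lemma psdmx_herm m (A : 'M[C]_m) : psdmx A -> adjmx A = A.
Proof. by case. Qed.

Lemma psdmx_congr m p (A : 'M[C]_m) (S : 'M[C]_(m, p)) :
  psdmx A -> psdmx (adjmx S *m A *m S).
Proof.
case=> hA pA; split; first by rewrite !adjmxM adjmxK hA mulmxA.
by move=> x; rewrite -!mulmxA cdot_adjmx adjmxK.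
Qed.

Lemma invmx_spectral m (A : 'M[C]_m) :
  invmx (spectralmx A) = adjmx (spectralmx A).
Proof. exact/adjmx_unitary/spectral_unitarymx. Qed.

Lemma spectralmx_adjK m (A : 'M[C]_m) :
  spectralmx A *m adjmx (spectralmx A) = 1%:M.
Proof. by rewrite -invmx_spectral mulmxV // spectral_unit. Qed.

Lemma psdmx_spectral m (A : 'M[C]_m) : psdmx A ->
  A = adjmx (spectralmx A) *m diag_mx (spectral_diag A) *m spectralmx A.
Proof.
case=> hA _; rewrite -invmx_spectral; apply: orthomx_spectralP.
by apply/normalmxP; rewrite adjmx_tstar hA.
Qed.

Lemma spectral_diag_ge0 m (A : 'M[C]_m) i : psdmx A -> 0 <= spectral_diag A 0 i.
Proof.
move=> psdA; have eA := psdmx_spectral psdA; set P := spectralmx A in eA.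
suff <- : cdot (adjmx P *m delta_mx i 0) (A *m (adjmx P *m delta_mx i 0)) =
    spectral_diag A 0 i by apply: (proj2 psdA).
rewrite -cdot_adjmx [in LHS]eA !mulmxA spectralmx_adjK mul1mx.
rewrite -(mulmxA _ P) spectralmx_adjK mulmx1 -mx_entry_cdot.
by rewrite mxE eqxx mulr1n.
Qed.

Lemma sqrtmxP m (A : 'M[C]_m) : psdmx A ->
  adjmx (sqrtmx A) = sqrtmx A /\ sqrtmx A *m sqrtmx A = A.
Proof.
move=> psdA; rewrite /sqrtmx invmx_spectral.
set P := spectralmx A; set s := map_mx sqrtC (spectral_diag A).
have s_adj : adjmx (diag_mx s) = diag_mx s.
  apply/matrixP => i j; rewrite adjmxE !mxE eq_sym.
  case: eqP => [->|_]; rewrite ?mulr0n ?rmorph0 // !mulr1n.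
  by rewrite geC0_conj // sqrtC_ge0 spectral_diag_ge0.
have s_sqr : diag_mx s *m diag_mx s = diag_mx (spectral_diag A).
  apply/matrixP => i j; rewrite mul_diag_mx !mxE.
  by case: eqP => [->|_]; rewrite ?mulr0n ?mulr0 // mulr1n -expr2 sqrtCK.
split; first by rewrite !adjmxM adjmxK s_adj mulmxA.
rewrite {1}(psdmx_spectral psdA) -/P -s_sqr !mulmxA.
by rewrite -(mulmxA _ P) spectralmx_adjK mulmx1.
Qed.

Lemma psdmx_kernel m (A : 'M[C]_m) x :
  psdmx A -> cdot x (A *m x) = 0 -> A *m x = 0.
Proof.
move=> /sqrtmxP[Sa SS] Ax0; rewrite -SS -mulmxA.
suff -> : sqrtmx A *m x = 0 by rewrite mulmx0.
apply/normsq_eq0/complexI.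
by rewrite -cdot_normsq -{1}Sa -cdot_adjmx mulmxA SS Ax0.
Qed.

End Adjoint.

Section UnitVector.
Variables (R : rcfType) (m : nat) (e : 'cV[R[i]]_m).
Hypothesis e_unit : cdot e e = 1.
Local Notation Q := (1%:M - ketbra e e).

Lemma adjmx_proj : adjmx Q = Q.
Proof. by rewrite adjmxB adjmx1 adj_ketbra. Qed.

Lemma proj_idem : Q *m Q = Q.
Proof.
have ee : adjmx e *m e = 1%:M.
  by apply/matrixP => i j; rewrite !ord1 -[LHS]/(cdot e e) e_unit mxE.
rewrite mulmxBl mul1mx mulmxBr mulmx1 !mulmxA -(mulmxA e) ee mulmx1.
by rewrite subrr subr0.
Qed.

Lemma cdot_pythagoras v :
  cdot v v = cdot v e * cdot e v + cdot (Q *m v) (Q *m v).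
Proof.
rewrite -{1}adjmx_proj -cdot_adjmx mulmxA proj_idem.
by rewrite mulmxBl mul1mx cdotBr cdot_ketbra addrC subrK.
Qed.

Lemma psdmx_id_sub_ketbra (c : R) :
  0 <= c <= 1 -> psdmx (1%:M - c%:C *: ketbra e e).
Proof.
case/andP=> c_ge0 c_le1; split.
  by rewrite adjmxB adjmx1 adjmxZ conjC_real adj_ketbra.
move=> v; rewrite mulmxBl mul1mx -scalemxAl cdotBr cdotZr cdot_ketbra.
rewrite cdot_pythagoras; have a_ge0 := cdot_mulC_ge0 v e.
set a := cdot v e * cdot e v in a_ge0 *.
have -> : a + cdot (Q *m v) (Q *m v) - c%:C * a =
    (1 - c)%:C * a + cdot (Q *m v) (Q *m v) by rewrite rmorphB rmorph1; ring.
apply: addr_ge0; last by rewrite cdot_normsq ler0c normsq_ge0.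
by rewrite mulr_ge0 // ler0c subr_ge0.
Qed.

End UnitVector.

HB.instance Definition _ (R : rcfType) :=
  NormedModule.copy R[i] (R[i] : numClosedFieldType)^o.

Section ComplexLimits.
Variable R : realType.
Local Notation C := R[i].

Lemma normC_real (r : R) : `|r%:C| = `|r|%:C.
Proof. by rewrite normc_def /= expr0n /= addr0 sqrtr_sqr. Qed.

Lemma cvg_realC (u : nat -> R) (l : R) :
  u @ \oo --> l -> (fun k => (u k)%:C) @ \oo --> l%:C.
Proof.
move=> /cvgrPdist_lt u_l; apply/cvgrPdist_lt => eps /gtC0_real[-> eps_gt0].
by near=> k; rewrite -rmorphB normC_real ltcR; near: k; apply: u_l.
Unshelve. all: by end_near. Qed.

Lemma cvg_Re (u : nat -> C) (l : C) :
  u @ \oo --> l -> (fun k => complex.Re (u k)) @ \oo --> complex.Re l.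
Proof.
move=> /cvgrPdist_lt u_l; apply/cvgrPdist_lt => eps eps_gt0.
have epsC_gt0 : 0 < eps%:C by rewrite ltcR.
near=> k; rewrite -ltcR -raddfB /=; apply: le_lt_trans (normc_ge_Re _) _.
by near: k; apply: u_l.
Unshelve. all: by end_near. Qed.

Lemma cvg_conj (u : nat -> C) (l : C) :
  u @ \oo --> l -> (fun k => Num.conj (u k)) @ \oo --> Num.conj l.
Proof.
move=> /cvgrPdist_lt u_l; apply/cvgrPdist_lt => eps eps_gt0.
by near=> k; rewrite -rmorphB normcJ; near: k; apply: u_l.
Unshelve. all: by end_near. Qed.

Lemma cvgC_unique (u : nat -> C) (a b : C) :
  u @ \oo --> a -> u @ \oo --> b -> a = b.
Proof. by move=> ua ub; rewrite -(cvg_lim _ ua) // -(cvg_lim _ ub). Qed.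

Lemma cvg_mx_entries p q (M : nat -> 'M[C]_(p, q)) (L : 'M[C]_(p, q)) :
  (forall i j, (fun k => M k i j) @ \oo --> L i j) -> M @ \oo --> L.
Proof.
move=> ML A [P PL sPA].
have : \forall k \near \oo, forall i j, P i j (M k i j).
  by do 2!apply: filter_forall => ?; apply: ML.
by apply: filterS => k; apply: sPA.
Qed.

Lemma cvg_mx_entry p q (M : nat -> 'M[C]_(p, q)) (L : 'M[C]_(p, q)) i j :
  M @ \oo --> L -> (fun k => M k i j) @ \oo --> L i j.
Proof. exact: (continuous_cvg _ (@coord_continuous _ _ _ i j L)). Qed.

Lemma cvg_mulmx2 p q r s (A : 'M[C]_(r, p)) (B : 'M[C]_(q, s))
    (M : nat -> 'M[C]_(p, q)) (L : 'M[C]_(p, q)) :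
  M @ \oo --> L -> (fun k => A *m M k *m B) @ \oo --> A *m L *m B.
Proof.
move=> ML; apply: cvg_mx_entries => i j.
rewrite mxE; under eq_cvg do rewrite mxE.
apply: cvg_big => [|b _]; first exact: add_continuous.
rewrite mxE; under eq_cvg do rewrite mxE.
apply: cvgM _ (cvg_cst _).
apply: cvg_big => [|a _]; first exact: add_continuous.
exact: cvgM (cvg_cst _) (cvg_mx_entry _).
Qed.

Lemma cvg_mxtrace p (M : nat -> 'M[C]_p) (L : 'M[C]_p) :
  M @ \oo --> L -> (fun k => \tr (M k)) @ \oo --> \tr L.
Proof.
move=> ML; apply: cvg_big => [|i _]; first exact: add_continuous.
exact: cvg_mx_entry.
Qed.

Lemma normsq_cvg0 p (v : nat -> 'cV[C]_p) :
  (fun k => normsq (v k)) @ \oo --> 0 -> v @ \oo --> (0 : 'cV[C]_p).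
Proof.
move=> /cvgrPdist_lt v0; apply: cvg_mx_entries => i j; rewrite (ord1 j) mxE.
apply/cvgrPdist_lt => eps /gtC0_real[-> eps_gt0].
near=> k; rewrite sub0r normrN -ltr_sqr ?nnegrE ?normr_ge0 ?ler0c ?ltW //.
apply: le_lt_trans (normsq_ge_entry _ _) _; rewrite -rmorphXn ltcR.
rewrite -[normsq _]ger0_norm ?normsq_ge0 // -[normsq _]subr0 distrC.
by near: k; apply: v0; rewrite exprn_gt0.
Unshelve. all: by end_near. Qed.

End ComplexLimits.

Section Iteration.
Variables (R : realType) (m : nat) (e : 'cV[R[i]]_m) (tau : R).
Variable T0 : 'M[R[i]]_m.
Hypotheses (e_unit : cdot e e = 1) (tau01 : 0 < tau < 1) (T0_psd : psdmx T0).
Local Notation T := (Tseq T0 e tau).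
Local Notation Q := (1%:M - ketbra e e).
Local Notation y k := (Q *m sqrtmx (T k) *m e).

Lemma tau_gt0 : 0 < tau. Proof. by case/andP: tau01. Qed.

Lemma Tseq_psd k : psdmx (T k).
Proof.
elim: k => [//|k IH]; rewrite [T k.+1]/=; have [Sa _] := sqrtmxP IH.
rewrite -{1}Sa; apply/psdmx_congr/psdmx_id_sub_ketbra => //.
by case/andP: tau01 => /ltW -> /ltW ->.
Qed.

Lemma TseqS k : T k.+1 =
  T k - tau%:C *: ketbra (sqrtmx (T k) *m e) (sqrtmx (T k) *m e).
Proof.
have [Sa SS] := sqrtmxP (Tseq_psd k).
rewrite [T k.+1]/=; set S := sqrtmx (T k) in Sa SS *.
rewrite mulmxBr mulmxBl mulmx1 SS -scalemxAr -scalemxAl /ketbra adjmxM Sa.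
by rewrite !mulmxA.
Qed.

Definition qform x k := complex.Re (cdot x (T k *m x)).

Lemma qformE x k : cdot x (T k *m x) = (qform x k)%:C.
Proof. by have [+ _] := geC0_real (proj2 (Tseq_psd k) x). Qed.

Lemma qform_ge0 x k : 0 <= qform x k.
Proof. by have [_ +] := geC0_real (proj2 (Tseq_psd k) x). Qed.

Lemma qform_cvg x : cvg (qform x @ \oo).
Proof.
apply: nonincreasing_is_cvgn; last by exists 0 => _ [k _ <-]; apply: qform_ge0.
apply/nonincreasing_seqP => k; rewrite -lecR -!qformE TseqS mulmxBl cdotBr.
rewrite -scalemxAl cdotZr cdot_ketbra lerBlDr lerDl.
by rewrite mulr_ge0 ?ler0c ?(ltW tau_gt0) ?cdot_mulC_ge0.
Qed.

(* Polarization reduces the entries of [T k] to its quadratic forms, which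
   are nonincreasing and nonnegative. *)
Lemma Tseq_cvg : cvg (T @ \oo).
Proof.
have cdot_cvg x : cvg ((fun k => cdot x (T k *m x)) @ \oo).
  under eq_fun do rewrite qformE.
  by apply/cvg_ex; eexists; apply/cvg_realC/qform_cvg.
apply/cvg_ex; exists (\matrix_(i, j) lim ((fun k => T k i j) @ \oo)).
apply: cvg_mx_entries => i j; rewrite mxE; apply/cvg_ex; eexists.
under eq_cvg do rewrite mx_entry_cdot cdot_polarization.
apply: cvgM (cvg_cst _) _; apply: cvgD; first apply: cvgM (cvg_cst _) _.
all: by apply: cvgB; apply: cdot_cvg.
Qed.

Local Notation Tinf := (lim (T @ \oo)).

Lemma cdot_Tseq_cvg x z :
  (fun k => cdot x (T k *m z)) @ \oo --> cdot x (Tinf *m z).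
Proof.
rewrite /cdot; under eq_cvg do rewrite mulmxA.
by rewrite mulmxA; apply/cvg_mx_entry/cvg_mulmx2/Tseq_cvg.
Qed.

Lemma Tinf_psd : psdmx Tinf.
Proof.
split.
  apply/matrixP => i j; rewrite adjmxE.
  apply: cvgC_unique (cvg_mx_entry (i:=i) (j:=j) Tseq_cvg).
  under eq_cvg do rewrite -(psdmx_herm (Tseq_psd _)) adjmxE.
  by apply/cvg_conj/cvg_mx_entry/Tseq_cvg.
move=> x; have : (fun k => cdot x (T k *m x)) @ \oo --> (limn (qform x))%:C.
  by under eq_cvg do rewrite qformE; apply/cvg_realC/qform_cvg.
move=> /(cvgC_unique (cdot_Tseq_cvg (x:=x) (z:=x))) ->.
rewrite ler0c; apply: limr_ge; first exact: qform_cvg.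
by apply: nearW; apply: qform_ge0.
Qed.

Lemma cdot_e_TseqS k : cdot e (T k.+1 *m e) =
  (1 - tau)%:C * cdot e (T k *m e) + tau%:C * (normsq (y k))%:C.
Proof.
have [Sa SS] := sqrtmxP (Tseq_psd k).
rewrite TseqS mulmxBl cdotBr -scalemxAl cdotZr cdot_ketbra.
set S := sqrtmx (T k) in Sa SS *.
rewrite -[Q *m S *m e]mulmxA -cdot_normsq.
have -> : cdot e (T k *m e) = cdot (S *m e) (S *m e).
  by rewrite -SS -mulmxA cdot_adjmx Sa.
rewrite [cdot (S *m e) (S *m e)](cdot_pythagoras e_unit) (cdotC e (S *m e)).
by rewrite rmorphB rmorph1; ring.
Qed.

Lemma mxtrace_proj_TseqS k : \tr (Q *m T k *m Q) - \tr (Q *m T k.+1 *m Q) =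
  (tau * normsq (y k))%:C.
Proof.
rewrite TseqS -raddfB /= -mulmxBl -mulmxBr subKr -scalemxAr -scalemxAl mxtraceZ.
have -> w : Q *m ketbra w w *m Q = ketbra (Q *m w) (Q *m w).
  by rewrite /ketbra adjmxM adjmx_proj !mulmxA.
by rewrite mxtrace_ketbra cdot_normsq realCM !mulmxA.
Qed.

Local Notation u := (fun k => tau * normsq (y k)).

Lemma series_y_mxtrace N :
  (series u N)%:C = \tr (Q *m T 0 *m Q) - \tr (Q *m T N *m Q).
Proof.
elim: N => [|N IH]; first by rewrite /series /= big_geq // subrr.
by rewrite seriesSr realCD IH -mxtrace_proj_TseqS addrA subrK.
Qed.

Lemma series_y_cvgC : (fun N => (series u N)%:C) @ \oo -->
  \tr (Q *m T 0 *m Q) - \tr (Q *m Tinf *m Q).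
Proof.
under eq_cvg do rewrite series_y_mxtrace.
by apply: cvgB; [apply: cvg_cst | apply/cvg_mxtrace/cvg_mulmx2/Tseq_cvg].
Qed.

Lemma series_y_cvg : cvg (series u @ \oo).
Proof. by apply/cvg_ex; eexists; apply: (cvg_Re series_y_cvgC). Qed.

Lemma series_y_lim :
  (limn (series u))%:C = \tr (Q *m T 0 *m Q - Q *m Tinf *m Q).
Proof.
rewrite raddfB; apply: cvgC_unique series_y_cvgC.
exact/cvg_realC/series_y_cvg.
Qed.

Lemma y_cvg0 : (fun k => y k) @ \oo --> (0 : 'cV[R[i]]_m).
Proof.
apply: normsq_cvg0.
have -> : (fun k => normsq (y k)) = (fun k => tau^-1 * u k).
  by apply: funext => k; rewrite mulrA mulVf ?mul1r ?gt_eqF ?tau_gt0.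
rewrite -(mulr0 tau^-1).
exact: cvgM (cvg_cst _) (cvg_series_cvg_0 series_y_cvg).
Qed.

Lemma qform_e_sum N :
  tau * series (qform e) N + qform e N = qform e 0 + series u N.
Proof.
elim: N => [|N IH]; first by rewrite /series /= !big_geq // mulr0 add0r addr0.
have qform_eS : qform e N.+1 = (1 - tau) * qform e N + tau * normsq (y N).
  by apply: complexI; rewrite -qformE cdot_e_TseqS qformE [RHS]realCD !realCM.
by rewrite !seriesSr qform_eS [RHS]addrA -IH; ring.
Qed.

Lemma cdot_e_Tseq_cvg0 : (fun k => cdot e (T k *m e)) @ \oo --> 0.
Proof.
under eq_cvg do rewrite qformE; apply: cvg_realC; apply: cvg_series_cvg_0.
have u_ge0 k : 0 <= u k by rewrite mulr_ge0 ?normsq_ge0 ?(ltW tau_gt0).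
have u_nd : nondecreasing_seq (series u).
  by apply/nondecreasing_seqP => N; rewrite seriesSr lerDl.
apply: nondecreasing_is_cvgn.
  by apply/nondecreasing_seqP => N; rewrite seriesSr lerDl qform_ge0.
exists ((qform e 0 + limn (series u)) / tau) => _ [N _ <-].
rewrite ler_pdivlMr ?tau_gt0 // mulrC.
have := qform_e_sum N; have := qform_ge0 e N.
have := nondecreasing_cvgn_le u_nd series_y_cvg N.
by move=> ? ? ?; lra.
Qed.

Lemma Tinf_e0 : Tinf *m e = 0.
Proof.
apply: psdmx_kernel Tinf_psd _.
exact: cvgC_unique (cdot_Tseq_cvg (x:=e) (z:=e)) cdot_e_Tseq_cvg0.
Qed.

Lemma e_Tinf0 : adjmx e *m Tinf = 0.
Proof. by rewrite -(psdmx_herm Tinf_psd) -adjmxM Tinf_e0 adjmx0. Qed.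

Lemma Tinf_proj : Tinf = Q *m Tinf *m Q.
Proof.
rewrite mulmxBl mul1mx mulmxBr mulmx1 /ketbra -mulmxA e_Tinf0 mulmx0 subr0.
by rewrite mulmxA Tinf_e0 mul0mx subr0.
Qed.

Lemma proj_Tseq_e_cvg0 : (fun k => Q *m T k *m e) @ \oo --> (0 : 'cV[R[i]]_m).
Proof.
by have := cvg_mulmx2 (A:=Q) (B:=e) Tseq_cvg; rewrite -mulmxA Tinf_e0 mulmx0.
Qed.

End Iteration.

Theorem proposition3p1 (R : realType) (n : nat)
  (e : 'cV[R[i]]_n.+1) (tau : R) (T0 : 'M[R[i]]_n.+1) :
  cdot e e = 1 -> 0 < tau < 1 -> psdmx T0 ->
  let T := Tseq T0 e tau in
  let Q : 'M[R[i]]_n.+1 := 1%:M - ketbra e e in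
  let a := fun k => cdot e (T k *m e) in
  let b := fun k => Q *m T k *m e in
  let B := fun k => Q *m T k *m Q in
  let y := fun k => Q *m sqrtmx (T k) *m e in
  cvg (T @ \oo) /\
  let Tinf := lim (T @ \oo) in
  let Binf := Q *m Tinf *m Q in
  (* (1) *)
  (forall k, a k.+1 = (1 - tau)%:C * a k + tau%:C * (normsq (y k))%:C) /\
  (* (2) *)
  cvg (series (fun k => tau * normsq (y k)) @ \oo) /\
  (limn (series (fun k => tau * normsq (y k))))%:C = \tr (B 0%N - Binf) /\
  (y @ \oo --> (0 : 'cV[R[i]]_n.+1)) /\
  (* (3) *)
  (a @ \oo --> 0) /\
  (* (4) *)
  (b @ \oo --> (0 : 'cV[R[i]]_n.+1)) /\
  Tinf = Binf /\ Tinf *m e = 0 /\ adjmx e *m Tinf = 0.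
Proof.
move=> e_unit tau01 T0_psd T Q a b B y.
split; first exact: Tseq_cvg.
move=> Tinf Binf.
split; first exact: cdot_e_TseqS.
split; first exact: series_y_cvg.
split; first exact: series_y_lim.
split; first exact: y_cvg0.
split; first exact: cdot_e_Tseq_cvg0.
split; first exact: proj_Tseq_e_cvg0.
split; first exact: Tinf_proj.
by split; [apply: Tinf_e0 | apply: e_Tinf0].
Qed.
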